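(* Consider the integral block packing algorithm driven by a multidimensional knapsack oracle ALG, producing the integral allocation $x$, and let $\lambda\ge0$. If $ALG^t\ge\lambda\cdot OPT^t$ for every $t$, then for every integral allocation $y$ and every horizon $T$, $SW_{[1:T]}(x)\ge\frac{\lambda}{1+\lambda}SW_{[1:T]}(y)$. Similarly, if $ALG^t\ge\lambda\cdot OPT^{*t}$ for every $t$, then for every fractional allocation $y^*$ and every horizon $T$, $SW_{[1:T]}(x)\ge\frac{\lambda}{1+\lambda}SW_{[1:T]}(y^* )$.
   Context: Online block packing: $m$ resources with capacities $B_j>0$; transactions $i\in\mathcal{C}$ with arrival time $a_i\in\{1,2,\dots\}$, base value $v_i\ge0$, discount $\rho_i\in[0,1]$, demand $w_i\in\mathbb{R}_+^m$; $v_i^t:=v_i(1-\rho_i)^{t-a_i}$. A fractional allocation is $\{x_i^t\}$ with $x_i^t\in[0,1]$, $x_i^t=0$ for $t<a_i$, $\sum_tx_i^t\le1$, and $\sum_iw_{ij}x_i^t\le B_j$ for all $t,j$; integral if all entries are in $\{0,1\}$. $SW_{[1:T]}(x)=\sum_{t=1}^T\sum_ix_i^tv_i^t$. The algorithm: for each $t=1,2,\dots$ let $A_t=\{i:a_i\le t\}$, $S_t=\{i:\exists s<t,\ x_i^s=1\}$, $U_t=A_t\setminus S_t$; the oracle ALG returns a set $\{x_i^t\}_{i\in U_t}\in\{0,1\}$ (with $x_i^t=0$ for $i\notin U_t$) satisfying $\sum_iw_{ij}x_i^t\le B_j$ for all $j$, where transaction $i$ has value $v_i^t$. Let $ALG^t=\sum_ix_i^tv_i^t$,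 let $OPT^t$ be the maximum of $\sum_{i\in U_t}z_iv_i^t$ over $z\in\{0,1\}^{U_t}$ with $\sum_iw_{ij}z_i\le B_j$ for all $j$, and $OPT^{*t}$ the same maximum over $z\in[0,1]^{U_t}$. *)

From HB Require Import structures.
From mathcomp Require Import all_boot all_order all_algebra.
From mathcomp Require Import classical_sets reals.
Set Implicit Arguments. Unset Strict Implicit. Unset Printing Implicit Defensive.
Import Order.TTheory GRing.Theory Num.Theory.
Local Open Scope ring_scope.

Definition vt (R : realType) (I : finType) (v rho : I -> R) (a : I -> nat)
  (i : I) (t : nat) : R := v i * (1 - rho i) ^+ (t - a i).

Definition feasible (R : realType) (I : finType) (m : nat)
  (w : I -> 'I_m -> R) (B : 'I_m -> R) (z : I -> R) : Prop :=
  forall j : 'I_m, \sum_(i : I) w i j * z i <= B j.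

Definition frac_alloc (R : realType) (I : finType) (m : nat) (a : I -> nat)
  (w : I -> 'I_m -> R) (B : 'I_m -> R) (y : nat -> I -> R) : Prop :=
  [/\ (forall t i, 0 <= y t i <= 1),
      (forall t i, (t < a i)%N -> y t i = 0),
      (* sum_t y_i^t <= 1 : all partial sums of the nonnegative series *)
      (forall i T, \sum_(t < T) y t i <= 1) &
      (forall t, feasible w B (y t))].

Definition int_alloc (R : realType) (I : finType) (m : nat) (a : I -> nat)
  (w : I -> 'I_m -> R) (B : 'I_m -> R) (y : nat -> I -> R) : Prop :=
  frac_alloc a w B y /\ (forall t i, y t i = 0 \/ y t i = 1).

Definition SW (R : realType) (I : finType) (v rho : I -> R) (a : I -> nat)
  (x : nat -> I -> R) (T : nat) : R :=
  \sum_(1 <= t < T.+1) \sum_(i : I) x t i * vt v rho a i t.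

Definition realize (R : realType) (I : finType) (x : nat -> I -> bool)
  : nat -> I -> R := fun t i => (x t i)%:R.

Definition served (I : finType) (x : nat -> I -> bool) (t : nat) : {set I} :=
  [set i | [exists s : 'I_t, (0 < s)%N && x s i]].

Definition unserved (I : finType) (a : I -> nat) (x : nat -> I -> bool)
  (t : nat) : {set I} :=
  [set i | (a i <= t)%N && (i \notin served x t)].

Definition alg_step (R : realType) (I : finType) (m : nat) (a : I -> nat)
  (w : I -> 'I_m -> R) (B : 'I_m -> R) (x : nat -> I -> bool) (t : nat) : Prop :=
  (forall i, i \notin unserved a x t -> x t i = false) /\
  feasible w B (realize R x t).

Definition ALGt (R : realType) (I : finType) (v rho : I -> R) (a : I -> nat)
  (x : nat -> I -> bool) (t : nat) : R :=
  \sum_(i : I) realize R x t i * vt v rho a i t.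

(* OPT^t : max over z in {0,1}^{U_t} (i.e. subsets S of U_t) satisfying
   the capacities. The empty set is feasible and values are >= 0, so the
   neutral element 0 of the max does not change the value. *)
Definition OPTt (R : realType) (I : finType) (m : nat) (v rho : I -> R)
  (a : I -> nat) (w : I -> 'I_m -> R) (B : 'I_m -> R) (U : {set I}) (t : nat) : R :=
  \big[Num.max/0]_(S : {set I} | (S \subset U) &&
        [forall j : 'I_m, \sum_(i : I) w i j * (i \in S)%:R <= B j])
     \sum_(i : I) (i \in S)%:R * vt v rho a i t.

(* OPT^{*t} : max (= sup, attained) over z in [0,1]^{U_t} satisfying capacities *)
Definition OPTstar (R : realType) (I : finType) (m : nat) (v rho : I -> R)
  (a : I -> nat) (w : I -> 'I_m -> R) (B : 'I_m -> R) (U : {set I}) (t : nat) : R :=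
  sup [set r : R | exists z : I -> R,
        [/\ (forall i, 0 <= z i <= 1), (forall i, i \notin U -> z i = 0),
            feasible w B z & r = \sum_(i : I) z i * vt v rho a i t]].

(* At time t split the welfare of a competing allocation y into the part
   earned on U_t and the part earned on the already served set S_t.  Restricted
   to U_t, y(t) is a feasible candidate for the time-t knapsack problem, so
   lambda times the first part is at most ALG^t.  A transaction in S_t was
   served by the algorithm at a single earlier time s, and since values decay,
   the total value y extracts from it is at most v_i^s, which the algorithm
   already collected.  Hence lambda SW(y) <= SW(x) + lambda SW(x). *)
From HB Require Import structures.
From mathcomp Require Import all_boot all_order all_algebra.
From mathcomp Require Import classical_sets reals.
Import Order.TTheory GRing.Theory Num.Theory.
Set Implicit Arguments.
Unset Strict Implicit.
Unset Printing Implicit Defensive.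
Local Open Scope ring_scope.

Definition restrict {R : realType} {I : finType} (U : {set I}) (z : I -> R)
  : I -> R := fun i => (i \in U)%:R * z i.

Section DiscountedValues.
Variables (R : realType) (I : finType) (v rho : I -> R) (a : I -> nat).
Hypotheses (v_ge0 : forall i, 0 <= v i) (rho01 : forall i, 0 <= rho i <= 1).

Lemma vt_ge0 i t : 0 <= vt v rho a i t.
Proof.
apply: mulr_ge0 => //; apply: exprn_ge0.
by case/andP: (rho01 i) => _; rewrite subr_ge0.
Qed.

Lemma vt_le s t i : (s <= t)%N -> vt v rho a i t <= vt v rho a i s.
Proof.
move=> le_st; apply: ler_wpM2l => //; case/andP: (rho01 i) => rho_ge0 rho_le1.
apply: ler_wiXn2l; last exact: leq_sub2r.
- by rewrite subr_ge0.
- by rewrite lerBlDr lerDl.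
Qed.

End DiscountedValues.

Section Feasibility.
Variables (R : realType) (I : finType) (m : nat).
Variables (w : I -> 'I_m -> R) (B : 'I_m -> R).
Hypothesis w_ge0 : forall i j, 0 <= w i j.

Lemma feasible_le (z z' : I -> R) :
  (forall i, z' i <= z i) -> feasible w B z -> feasible w B z'.
Proof.
move=> le_z'z feas_z j; apply: le_trans (feas_z j).
by apply: ler_sum => i _; apply: ler_wpM2l.
Qed.

Lemma restrict_le (U : {set I}) (z : I -> R) i :
  0 <= z i -> restrict U z i <= z i.
Proof. by rewrite /restrict; case: (i \in U); rewrite ?mul0r ?mul1r. Qed.

Lemma feasible_restrict (U : {set I}) (z : I -> R) :
  (forall i, 0 <= z i) -> feasible w B z -> feasible w B (restrict U z).
Proof. by move=> z_ge0; apply: feasible_le => i; apply: restrict_le. Qed.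

Variables (v rho : I -> R) (a : I -> nat).
Hypotheses (v_ge0 : forall i, 0 <= v i) (rho01 : forall i, 0 <= rho i <= 1).

Lemma OPTt_ge (U S : {set I}) t :
  S \subset U -> feasible w B (fun i => (i \in S)%:R) ->
  \sum_i (i \in S)%:R * vt v rho a i t <= OPTt v rho a w B U t.
Proof.
move=> sSU feas_S; apply: (le_bigmax_cond _ (fun S : {set I} => _)).
by rewrite sSU; apply/forallP => j; exact: feas_S.
Qed.

Lemma OPTstar_ge (U : {set I}) (z : I -> R) t :
  (forall i, 0 <= z i <= 1) -> (forall i, i \notin U -> z i = 0) ->
  feasible w B z ->
  \sum_i z i * vt v rho a i t <= OPTstar v rho a w B U t.
Proof.
move=> z01 z_out feas_z; apply: sup_upper_bound; last by exists z.
split; first by exists (\sum_i z i * vt v rho a i t), z.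
exists (\sum_i vt v rho a i t) => _ [z' [z'01 _ _ ->]].
apply: ler_sum => i _; rewrite -[leRHS]mul1r ler_wpM2r ?vt_ge0 //.
by case/andP: (z'01 i).
Qed.

Lemma int_restrict_le_OPTt (U : {set I}) (y : I -> R) t :
  (forall i, y i = 0 \/ y i = 1) -> feasible w B y ->
  \sum_i restrict U y i * vt v rho a i t <= OPTt v rho a w B U t.
Proof.
move=> y01 feas_y; set S := [set i in U | y i == 1].
have restrictE i : restrict U y i = (i \in S)%:R.
  rewrite /restrict inE; case: (i \in U); rewrite ?mul0r ?mul1r //=.
  by case: (y01 i) => ->; rewrite ?eqxx // eq_sym oner_eq0.
under eq_bigr => i _ do rewrite restrictE.
apply: OPTt_ge; first by apply/fintype.subsetP => i; rewrite inE => /andP[].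
apply: (feasible_le (z := restrict U y)) => [i|]; first by rewrite restrictE.
by apply: feasible_restrict feas_y => i; case: (y01 i) => ->.
Qed.

Lemma frac_restrict_le_OPTstar (U : {set I}) (y : I -> R) t :
  (forall i, 0 <= y i <= 1) -> feasible w B y ->
  \sum_i restrict U y i * vt v rho a i t <= OPTstar v rho a w B U t.
Proof.
move=> y01 feas_y; apply: OPTstar_ge.
- by move=> i; rewrite /restrict; case: (i \in U); rewrite ?mul0r ?mul1r ?lexx ?ler01.
- by move=> i /negbTE U'i; rewrite /restrict U'i mul0r.
- by apply: feasible_restrict feas_y => i; case/andP: (y01 i).
Qed.

End Feasibility.

Section Algorithm.
Variables (R : realType) (I : finType) (m : nat).
Variables (w : I -> 'I_m -> R) (B : 'I_m -> R) (v rho : I -> R) (a : I -> nat).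
Variable x : nat -> I -> bool.
Hypotheses (v_ge0 : forall i, 0 <= v i) (rho01 : forall i, 0 <= rho i <= 1).
Hypothesis alg : forall t, (1 <= t)%N -> alg_step a w B x t.

Lemma servedP i t : reflect (exists2 s, (0 < s < t)%N & x s i) (i \in served x t).
Proof.
rewrite inE; apply: (iffP existsP) => [[s /andP[s_gt0 xs]]|[s /andP[s_gt0 lt_st] xs]].
  by exists s; rewrite ?s_gt0 ?ltn_ord.
by exists (Ordinal lt_st); rewrite /= s_gt0.
Qed.

Lemma alg_not_served_twice i s t : (0 < s < t)%N -> x s i -> x t i = false.
Proof.
move=> /andP[s_gt0 lt_st] xs; have [alg_U _] := alg (leq_ltn_trans (leq0n s) lt_st).
apply: alg_U; rewrite inE negb_and negbK; apply/orP; right.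
by apply/servedP; exists s; rewrite ?s_gt0.
Qed.

Lemma alg_serves_once i s s' :
  (0 < s)%N -> (0 < s')%N -> x s i -> x s' i -> s = s'.
Proof.
move=> s_gt0 s'_gt0 xs xs'; case: (ltngtP s s') => // lt_ss'.
- by rewrite (@alg_not_served_twice i s) ?s_gt0 in xs'.
- by rewrite (@alg_not_served_twice i s') ?s'_gt0 in xs.
Qed.

Lemma served_vt_le i s t :
  (0 < s)%N -> x s i -> i \in served x t -> vt v rho a i t <= vt v rho a i s.
Proof.
move=> s_gt0 xs /servedP[s' /andP[s'_gt0 lt_s't] xs'].
by rewrite (alg_serves_once s_gt0 s'_gt0 xs xs'); apply/vt_le/ltnW.
Qed.

Lemma frac_alloc_sum_le1 (y : nat -> I -> R) i T :
  frac_alloc a w B y -> \sum_(1 <= t < T.+1) y t i <= 1.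
Proof.
case=> y01 _ sum_le1 _; apply: le_trans (sum_le1 i T.+1).
rewrite -(big_mkord xpredT (fun t => y t i)) (big_ltn (ltn0Sn T)) lerDr.
by case/andP: (y01 0%N i).
Qed.

Lemma served_welfare_le (y : nat -> I -> R) T i :
  frac_alloc a w B y ->
  \sum_(1 <= t < T.+1) restrict (served x t) (y t) i * vt v rho a i t
  <= \sum_(1 <= t < T.+1) realize R x t i * vt v rho a i t.
Proof.
move=> y_alloc; have [y01 _ _ _] := y_alloc.
have alg_ge0 t : 0 <= realize R x t i * vt v rho a i t.
  by rewrite mulr_ge0 ?vt_ge0 ?ler0n.
case: (servedP i T.+1) => [[s /andP[s_gt0 lt_sT] xs]|not_served].
- apply: (@le_trans _ _ (\sum_(1 <= t < T.+1) y t i * vt v rho a i s)).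
    apply: ler_sum_nat => t _; rewrite /restrict.
    have y_ge0 : 0 <= y t i by case/andP: (y01 t i).
    case: (boolP (i \in served x t)) => [served_t|_].
      by rewrite mul1r ler_wpM2l // (served_vt_le s_gt0 xs served_t).
    by rewrite !mul0r mulr_ge0 ?vt_ge0.
  rewrite -mulr_suml; apply: (@le_trans _ _ (vt v rho a i s)).
    by rewrite ler_piMl ?vt_ge0 ?frac_alloc_sum_le1.
  rewrite (bigD1_seq s) ?mem_index_iota ?s_gt0 ?iota_uniq //= /realize xs mul1r.
  by rewrite lerDl; apply: sumr_ge0 => t _; apply: alg_ge0.
- rewrite big_nat_cond big1 => [|t /andP[/andP[_ le_tT] _]]; first exact: sumr_ge0.
  rewrite /restrict; case: servedP => [[s /andP[s_gt0 lt_st] xs]|_]; last first.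
    by rewrite !mul0r.
  by case: not_served; exists s; rewrite // s_gt0 (leq_trans lt_st (ltnW le_tT)).
Qed.

Lemma frac_alloc_le_split (y : nat -> I -> R) t i :
  frac_alloc a w B y ->
  y t i <= restrict (unserved a x t) (y t) i + restrict (served x t) (y t) i.
Proof.
case=> _ y_early _ _; rewrite /restrict /unserved inE.
case: leqP => [_|lt_t]; last by rewrite y_early // !mulr0 addr0.
by case: (i \in served x t); rewrite /= ?mul1r ?mul0r ?addr0 ?add0r.
Qed.

Lemma competitive_bound (lam : R) (O : nat -> R) (y : nat -> I -> R) T :
  0 <= lam -> frac_alloc a w B y ->
  (forall t, (1 <= t)%N ->
     \sum_i restrict (unserved a x t) (y t) i * vt v rho a i t <= O t) ->
  (forall t, (1 <= t)%N -> lam * O t <= ALGt v rho a x t) ->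
  lam / (1 + lam) * SW v rho a y T <= SW v rho a (realize R x) T.
Proof.
move=> lam_ge0 y_alloc unserved_le_O ALG_ge_O.
set ALG := SW v rho a (realize R x) T.
set P1 := \sum_(1 <= t < T.+1)
  \sum_i restrict (unserved a x t) (y t) i * vt v rho a i t.
set P2 := \sum_(1 <= t < T.+1)
  \sum_i restrict (served x t) (y t) i * vt v rho a i t.
have SW_split : SW v rho a y T <= P1 + P2.
  rewrite -big_split; apply: ler_sum => t _; rewrite -big_split /=.
  apply: ler_sum => i _; rewrite -mulrDl ler_wpM2r ?vt_ge0 //.
  exact: frac_alloc_le_split.
have P1_le : lam * P1 <= ALG.
  rewrite mulr_sumr; apply: ler_sum_nat => t /andP[t_ge1 _].
  exact: le_trans (ler_wpM2l lam_ge0 (unserved_le_O t t_ge1)) (ALG_ge_O t t_ge1).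
have P2_le : P2 <= ALG.
  rewrite /P2 /ALG /SW exchange_big [leRHS]exchange_big /=.
  by apply: ler_sum => i _; apply: served_welfare_le.
rewrite mulrAC ler_pdivrMr ?ltr_pwDl // mulrDr mulr1 addrC.
apply: le_trans (ler_wpM2l lam_ge0 SW_split) _.
by rewrite mulrDr addrC lerD // mulrC ler_wpM2r.
Qed.

End Algorithm.

Theorem lemma3 (R : realType) (I : finType) (m : nat) (B : 'I_m -> R)
  (a : I -> nat) (v rho : I -> R) (w : I -> 'I_m -> R)
  (x : nat -> I -> bool) (lam : R) :
  (forall j, 0 < B j) ->
  (forall i, (1 <= a i)%N) ->
  (forall i, 0 <= v i) ->
  (forall i, 0 <= rho i <= 1) ->
  (forall i j, 0 <= w i j) ->
  (forall t, (1 <= t)%N -> alg_step a w B x t) ->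
  0 <= lam ->
  ((forall t, (1 <= t)%N ->
      lam * OPTt v rho a w B (unserved a x t) t <= ALGt v rho a x t) ->
   forall (y : nat -> I -> R) (T : nat), int_alloc a w B y ->
     lam / (1 + lam) * SW v rho a y T <= SW v rho a (realize R x) T)
  /\
  ((forall t, (1 <= t)%N ->
      lam * OPTstar v rho a w B (unserved a x t) t <= ALGt v rho a x t) ->
   forall (y : nat -> I -> R) (T : nat), frac_alloc a w B y ->
     lam / (1 + lam) * SW v rho a y T <= SW v rho a (realize R x) T).
Proof.
move=> _ _ v_ge0 rho01 w_ge0 alg lam_ge0.
split=> [ALG_ge_OPT | ALG_ge_OPTstar] y T.
- case=> y_alloc y_int; have [_ _ _ y_feas] := y_alloc.
  apply: (competitive_bound v_ge0 rho01 alg T lam_ge0 y_alloc _ ALG_ge_OPT) => t _.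
  exact: int_restrict_le_OPTt (y_int t) (y_feas t).
- move=> y_alloc; have [y01 _ _ y_feas] := y_alloc.
  apply: (competitive_bound v_ge0 rho01 alg T lam_ge0 y_alloc _ ALG_ge_OPTstar).
  by move=> t _; apply: frac_restrict_le_OPTstar (y01 t) (y_feas t).
Qed.
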